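(* Let $q$ be a prime power, $n\ge1$, $P=\sum_{s=0}^m a_s\theta^s\in\mathbb F_q[\theta]$ nonzero, where $m\ge\deg P$ is an integer with $(q-1)\mid(m+n)$, and put $\iota(P)=\sum_{i=0}^m a_{m-i}\theta^i$ and $k=\frac{m+n}{q-1}-1$, assumed $\ge1$. For a polynomial $R=\sum_s b_s\theta^s$ let $\mathfrak M(R,T,n,k)\in M_{k\times k}(\mathbb F_q[T])$ have entries $\mathfrak M(R,T,n,k)_{i,j}=\sum_{l=0}^nT^{n-l}(-1)^l\binom nl b_{iq-j-l}$ ($1\le i,j\le k$, $b_s=0$ for $s<0$ or $s>m$). Let $W_3=\sum_{i=1}^k\varepsilon_{i,k+1-i}$ be the $k\times k$ matrix with ones on the antidiagonal and zeros elsewhere. Then $$W_3\,\mathfrak M(P,T,n,k)\,W_3^{-1}=(-T)^n\,\mathfrak M(\iota(P),T^{-1},n,k).$$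
   Context: $\varepsilon_{ij}$ denotes the elementary matrix with $1$ in position $(i,j)$ and $0$ elsewhere. $\mathfrak M(\iota(P),T^{-1},n,k)$ means $\mathfrak M(\iota(P),T,n,k)$ with $T$ replaced by $T^{-1}$. Binomial coefficients are read in $\mathbb F_q$. *)

From mathcomp Require Import all_boot all_order all_algebra.
From mathcomp Require Export fraction.
Set Implicit Arguments. Unset Strict Implicit. Unset Printing Implicit Defensive.
Import GRing.Theory.
Local Open Scope ring_scope.

Definition bcoef (F : nzRingType) (R : {poly F}) (s : int) : F :=
  match s with Posz s' => R`_s' | Negz _ => 0 end.

Definition iota_poly (F : nzRingType) (m : nat) (P : {poly F}) : {poly F} :=
  \poly_(i < m.+1) P`_(m - i).

Definition Mfrak (F K : nzRingType) (emb : F -> K) (q : nat)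
  (R : {poly F}) (t : K) (n k : nat) : 'M[K]_k :=
  \matrix_(i < k, j < k)
    \sum_(l < n.+1) t ^+ (n - l) * emb ((-1) ^+ l * 'C(n, l)%:R *
        bcoef R ((i.+1 * q)%:Z - (j.+1)%:Z - l%:Z)).

Definition W3 (K : nzRingType) (k : nat) : 'M[K]_k :=
  \matrix_(i < k, j < k) (j == rev_ord i)%:R.

Definition embF (F : fieldType) (a : F) : {fraction {poly F}} := @tofrac _ (a%:P).

From mathcomp Require Import all_boot all_order all_algebra.
From mathcomp Require Import fraction.
From mathcomp Require Import zify ring.
Import GRing.Theory.
Local Open Scope ring_scope.

(** Conjugating by the antidiagonal involution [W3] reverses both indices,
    and the entry of [Mfrak (iota P) t^-1] at [(i, j)] becomes, after the
    substitution [l -> n - l], the entry of [Mfrak P t] at [(k+1-i, k+1-j)]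
    up to the factor [(-t)^n]: the coefficient indices [iq - j - (n - l)] of
    [iota P] and [(k+1-i)q - (k+1-j) - l] of [P] add up to
    [(k+1)(q-1) - n = m], which is exactly how [iota] reflects coefficients. *)

Lemma mulmx_W3 (K : nzRingType) k : W3 K k *m W3 K k = 1%:M.
Proof.
apply/matrixP => i j; rewrite !mxE (bigD1 (rev_ord i)) //= !mxE eqxx mul1r.
rewrite rev_ordK eq_sym big1 ?addr0 // => r /negbTE r_i.
by rewrite !mxE r_i mul0r.
Qed.

Lemma invmx_W3 (K : comUnitRingType) k : invmx (W3 K k) = W3 K k.
Proof.
have W3K := mulmx_W3 K k; have [W3_unit _] := mulmx1_unit W3K.
by rewrite -[LHS]mulmx1 -W3K mulmxA mulVmx // mul1mx.
Qed.

Lemma W3_conj (K : nzRingType) k (M : 'M[K]_k) :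
  W3 K k *m M *m W3 K k = \matrix_(i, j) M (rev_ord i) (rev_ord j).
Proof.
apply/matrixP => i j; rewrite !mxE (bigD1 (rev_ord j)) //= !mxE.
rewrite (bigD1 (rev_ord i)) //= !mxE eqxx mul1r rev_ordK eqxx mulr1.
rewrite big1 ?addr0; last first.
  by move=> r /negbTE; rewrite !mxE eq_sym => ->; rewrite mul0r.
rewrite big1 ?addr0 // => r r_j; rewrite !mxE.
suff /negbTE -> : j != rev_ord r by rewrite mulr0.
by apply: contra r_j => /eqP ->; rewrite rev_ordK.
Qed.

Lemma bcoef_iota_poly (F : nzRingType) m (P : {poly F}) (s t : int) :
  (size P <= m.+1)%N -> s + t = m%:Z -> bcoef (iota_poly m P) t = bcoef P s.
Proof.
move=> szP; case: t => [t|t]; case: s => [s|s] /= st_m.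
- by rewrite coef_poly ifT; [congr (P`_ _) | ]; lia.
- by rewrite coef_poly ifF //; lia.
- by rewrite nth_default //; apply: leq_trans szP _; lia.
- lia.
Qed.

Lemma Mfrak_iota_poly (F : nzRingType) (K : comUnitRingType)
    (emb : {rmorphism F -> K}) q m n k (P : {poly F}) (t : K) :
  (size P <= m.+1)%N -> t \is a GRing.unit -> (0 < q)%N ->
  (k.+1 * q.-1 = m + n)%N ->
  (- t) ^+ n *: Mfrak emb q (iota_poly m P) t^-1 n k
  = \matrix_(i, j) Mfrak emb q P t n k (rev_ord i) (rev_ord j).
Proof.
move=> szP t_unit q_gt0 k_def; apply/matrixP => i j; rewrite !mxE mulr_sumr.
rewrite (reindex_inj rev_ord_inj) /=; apply: eq_bigr => l _.
have l_le_n : (l <= n)%N by rewrite -ltnS.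
have [i_lt_k j_lt_k] := (ltn_ord i, ltn_ord j).
rewrite subSS subKn // -[in RHS]bin_sub //.
rewrite (@bcoef_iota_poly _ m _ (((k - i.+1).+1 * q)%:Z - (k - j.+1).+1%:Z - l%:Z)) //;
  last first.
  have qk_sum : ((k - i) * q + i.+1 * q = m + n + k.+1)%N.
    rewrite -mulnDl (_ : k - i + i.+1 = k.+1)%N; last lia.
    by rewrite -{1}(prednK q_gt0) mulnS k_def addnC.
  rewrite -!subSn // !subSS; move: qk_sum; move: ((k - i) * q)%N (i.+1 * q)%N => a b.
  lia.
rewrite !(rmorphM, rmorphXn, rmorphN, rmorph1).
set c := emb _; set x := emb _.
have t_inv : t ^+ l * t^-1 ^+ l = 1 by rewrite -exprMn mulrV ?expr1n.
have sign2 : (-1) ^+ (n - l) * (-1) ^+ (n - l) = 1 :> K.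
  by rewrite -exprD addnn -mul2n exprM sqrrN !expr1n.
have -> : (- t) ^+ n = (-1) ^+ (n - l) * (-1) ^+ l * (t ^+ (n - l) * t ^+ l).
  by rewrite [LHS]exprNn -!exprD subnK.
transitivity (t ^+ (n - l) * ((-1) ^+ l * c * x) * ((-1) ^+ (n - l) * (-1) ^+ (n - l))
  * (t ^+ l * t^-1 ^+ l)); first by ring.
by rewrite t_inv sign2 !mulr1.
Qed.

Theorem proposition5p3 (F : finFieldType) (n m : nat) (P : {poly F}) :
  (1 <= n)%N -> P != 0 -> (size P <= m.+1)%N ->
  (#|F|.-1 %| m + n)%N ->
  (1 <= ((m + n) %/ #|F|.-1).-1)%N ->
  let k := ((m + n) %/ #|F|.-1).-1 in
  let T : {fraction {poly F}} := @tofrac _ 'X in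
  W3 _ k *m Mfrak (@embF F) #|F| P T n k *m invmx (W3 _ k)
  = (- T) ^+ n *: Mfrak (@embF F) #|F| (iota_poly m P) T^-1 n k.
Proof.
move=> _ _ szP q1_dvd k_gt0 k T.
have q_gt1 : (1 < #|F|)%N := card_finNzRing_gt1 F.
have k_def : (k.+1 * #|F|.-1 = m + n)%N by rewrite prednK ?divnK //; lia.
have T_unit : T \is a GRing.unit by rewrite unitfE tofrac_eq0 polyX_eq0.
rewrite invmx_W3 W3_conj.
by rewrite (@Mfrak_iota_poly _ _ (@tofrac {poly F} \o polyC)) // ltnW.
Qed.
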